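(* Let $\phi_1,\dots,\phi_n:\mathbb{R}^d\to\mathbb{R}$ be differentiable and let $P(w)=\frac1n\sum_{i=1}^n\phi_i(w)$. Suppose $P$ is $H$-strongly convex and $(1/\gamma)$-smooth, and let $w^*$ be a minimizer of $P$. Run the stratified-sampling minibatch SGD algorithm described in the context with step sizes $\eta_t=1/(a+Ht)$, where $a\ge 1/\gamma-H$. Then for every $T\ge1$, $$\inf_{t\in[T]}\mathbb{E}P(w_{t+1})-P(w^* )\le\frac1T\sum_{t=1}^T\mathbb{E}P(w_{t+1})-P(w^* )\le\frac1T\Big[\frac a2\|w^*\|^2+\mathbb{E}\sum_{t=1}^T\frac{V_t}{a+Ht}\Big],$$ where $V_t$ is the variance of the stochastic gradient $g_t$ defined in the context.
   Context: $\|\cdot\|$ denotes the Euclidean norm and $[T]=\{1,\dots,T\}$. A differentiable $\phi:\mathbb{R}^d\to\mathbb{R}$ is $H$-strongly convex ($H\ge0$) if $\phi(u)\ge\phi(v)+\nabla\phi(v)^\top(u-v)+\frac H2\|u-v\|^2$ for all $u,v$, and $(1/\gamma)$-smooth ($\gamma>0$) if $\phi(u)\le\phi(v)+\nabla\phi(v)^\top(u-v)+\frac1{2\gamma}\|u-v\|^2$ for all $u,v$. Algorithm (SGD with stratified sampling): start with $w_1=0$. At each step $t=1,2,\dots$, a partition of $[n]=\{1,\dots,n\}$ into nonempty disjoint sets $C_1^t,\dots,C_k^t$ with $|C_i^t|=n_i^t$, and positive integers $b_1^t,\dots,b_k^t$, are chosen (possibly depending on the past, but before the step-$t$ sampling).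 Then, independently across $i$ and of the past given these choices, for each $i$ a multiset $B_i^t$ of $b_i^t$ indices is drawn i.i.d. uniformly (with replacement) from $C_i^t$. Set $g_t=\frac1n\sum_{i=1}^k\frac{n_i^t}{b_i^t}\sum_{s\in B_i^t}\nabla\phi_s(w_t)$ and $w_{t+1}=w_t-\eta_t g_t$. The variance is $V_t=\mathbb{E}\big[\|g_t-\nabla P(w_t)\|^2\,\big|\,\text{past}\big]$ (note $\mathbb{E}[g_t\mid\text{past}]=\nabla P(w_t)$). *)

From HB Require Import structures.
From mathcomp Require Import all_boot all_order all_algebra.
From mathcomp Require Import all_classical all_reals all_analysis.
Set Implicit Arguments. Unset Strict Implicit. Unset Printing Implicit Defensive.
Import Order.TTheory GRing.Theory Num.Theory.
Import numFieldNormedType.Exports.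
Local Open Scope ring_scope.

Section SGD.
Variables (R : realType) (d n : nat).
Notation vec := 'rV[R]_d.

Definition dotv (u v : vec) : R := \sum_(j < d) u ord0 j * v ord0 j.
Definition sqnorm (u : vec) : R := dotv u u.

Definition is_gradient (f : vec -> R) (g : vec -> vec) : Prop :=
  forall w, differentiable f w /\ forall h, ('d f w : vec -> R) h = dotv (g w) h.

Definition Pavg (phi : 'I_n -> vec -> R) (w : vec) : R :=
  n%:R^-1 * \sum_(i < n) phi i w.
Definition gradavg (grad : 'I_n -> vec -> vec) (w : vec) : vec :=
  n%:R^-1 *: \sum_(i < n) grad i w.

Definition strongly_convex (H : R) (f : vec -> R) (g : vec -> vec) : Prop :=
  forall u v, f v + dotv (g v) (u - v) + H / 2 * sqnorm (u - v) <= f u.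
Definition smooth (gam : R) (f : vec -> R) (g : vec -> vec) : Prop :=
  forall u v, f u <= f v + dotv (g v) (u - v) + 1 / (2 * gam) * sqnorm (u - v).

(* A step choice: the list of blocks (C_i, b_i). *)
Definition choice_t := seq ({set 'I_n} * nat).
(* The outcome of one step: the list of sampled batches B_i (aligned with blocks). *)
Definition outcome := seq (seq 'I_n).
(* A history: outcomes of past steps, most recent first. *)
Definition history := seq outcome.

Definition valid_choice (ch : choice_t) : Prop :=
  (forall j : 'I_n, count (fun p : {set 'I_n} * nat => j \in p.1) ch = 1%N) /\
  (forall p, p \in ch -> p.1 != finset.set0 /\ (0 < p.2)%N).

(* Expectation of F over b i.i.d. uniform draws (with replacement) from C. *)
Fixpoint Ex_draws (C : {set 'I_n}) (b : nat) (F : seq 'I_n -> R) : R :=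
  match b with
  | 0%N => F [::]
  | b'.+1 => #|C|%:R^-1 * \sum_(x in C) Ex_draws C b' (fun s => F (x :: s))
  end.

Fixpoint Ex_step (ch : choice_t) (F : outcome -> R) : R :=
  match ch with
  | [::] => F [::]
  | (C, b) :: rest => Ex_draws C b (fun B => Ex_step rest (fun Bs => F (B :: Bs)))
  end.

Definition stoch_grad (grad : 'I_n -> vec -> vec) (ch : choice_t) (o : outcome)
    (w : vec) : vec :=
  n%:R^-1 *: \sum_(pB <- zip ch o)
     ((#|pB.1.1|%:R / pB.1.2%:R) *: \sum_(s <- pB.2) grad s w).

Variables (grad : 'I_n -> vec -> vec) (strat : history -> choice_t) (eta : nat -> R).

(* Iterate w_{t} after history h of length t-1 (w_1 = 0). *)
Fixpoint iterate (h : history) : vec :=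
  match h with
  | [::] => 0
  | o :: h' => iterate h' - eta (size h').+1 *: stoch_grad grad (strat h') o (iterate h')
  end.

Fixpoint ExT (m : nat) (F : history -> R) (h : history) : R :=
  match m with
  | 0%N => F h
  | m'.+1 => Ex_step (strat h) (fun o => ExT m' F (o :: h))
  end.

(* Conditional variance V_t of g_t given history h (of length t-1). *)
Definition Vcond (h : history) : R :=
  Ex_step (strat h) (fun o =>
    sqnorm (stoch_grad grad (strat h) o (iterate h) - gradavg grad (iterate h))).

End SGD.

From HB Require Import structures.
From mathcomp Require Import all_boot all_order all_algebra.
From mathcomp Require Import all_classical all_reals all_analysis.
From mathcomp Require Import ring lra.
Import Order.TTheory GRing.Theory Num.Theory.
Set Implicit Arguments. Unset Strict Implicit. Unset Printing Implicit Defensive.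
Local Open Scope ring_scope.

(* With eta_t = 1/(a + H t) <= gam, smoothness bounds P(w_(t+1)) in terms of g_t; since the
   stratified estimator g_t is unbiased, E |g_t|^2 = |grad P(w_t)|^2 + V_t, and strong convexity
   then gives the potential inequality
     E P(w_(t+1)) - P(wstar) + (a + H t)/2 E|w_(t+1) - wstar|^2
       <= (a + H (t-1))/2 E|w_t - wstar|^2 + E V_t / (a + H t).
   Summing over t telescopes down to a/2 |w_1 - wstar|^2 = a/2 |wstar|^2, and a minimum is at
   most the average. *)

Section InnerProduct.
Variables (R : realType) (d : nat).
Implicit Types (u v w : 'rV[R]_d).

Lemma dotvC u v : dotv u v = dotv v u.
Proof. by apply: eq_bigr => j _; rewrite mulrC. Qed.

Lemma dotvDr u v w : dotv u (v + w) = dotv u v + dotv u w.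
Proof. by rewrite /dotv -big_split; apply: eq_bigr => j _; rewrite mxE mulrDr. Qed.

Lemma dotvZr u v (k : R) : dotv u (k *: v) = k * dotv u v.
Proof. by rewrite /dotv mulr_sumr; apply: eq_bigr => j _; rewrite mxE mulrCA. Qed.

Lemma dotvNr u v : dotv u (- v) = - dotv u v.
Proof. by rewrite -scaleN1r dotvZr mulN1r. Qed.

Lemma dotv0r u : dotv u 0 = 0.
Proof. by rewrite /dotv big1 // => j _; rewrite mxE mulr0. Qed.

Lemma dotvZl u v (k : R) : dotv (k *: u) v = k * dotv u v.
Proof. by rewrite dotvC dotvZr dotvC. Qed.

Lemma dotvNl u v : dotv (- u) v = - dotv u v.
Proof. by rewrite dotvC dotvNr dotvC. Qed.

Lemma dotvBl u v w : dotv (u - v) w = dotv u w - dotv v w.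
Proof. by rewrite dotvC dotvDr dotvNr !(dotvC w). Qed.

Lemma dotv_sumr I (r : seq I) (P : pred I) (F : I -> 'rV[R]_d) u :
  dotv u (\sum_(i <- r | P i) F i) = \sum_(i <- r | P i) dotv u (F i).
Proof. exact: (big_morph (dotv u) (dotvDr u) (dotv0r u)). Qed.

Lemma sqnorm_ge0 u : 0 <= sqnorm u.
Proof. by apply: sumr_ge0 => j _; rewrite -expr2 sqr_ge0. Qed.

Lemma sqnormN u : sqnorm (- u) = sqnorm u.
Proof. by rewrite /sqnorm dotvNl dotvNr opprK. Qed.

Lemma sqnormZ (k : R) u : sqnorm (k *: u) = k ^+ 2 * sqnorm u.
Proof. by rewrite /sqnorm dotvZl dotvZr expr2 mulrA. Qed.

Lemma sqnormB u v : sqnorm (u - v) = sqnorm u - 2 * dotv u v + sqnorm v.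
Proof. by rewrite /sqnorm !dotvBl !(dotvC _ (u - v)) !dotvBl (dotvC v u); ring. Qed.

End InnerProduct.

Section SamplingExpectation.
Variables (R : realType) (n : nat).
Implicit Types (C : {set 'I_n}) (b : nat) (ch : choice_t n).

Lemma card_neq0 C : C != finset.set0 -> (#|C|%:R : R) != 0.
Proof. by move=> C0; rewrite pnatr_eq0 -lt0n card_gt0. Qed.

Lemma eq_Ex_draws C b (F G : seq 'I_n -> R) :
  (forall s, F s = G s) -> Ex_draws C b F = Ex_draws C b G.
Proof.
elim: b F G => [|b IH] F G FG /=; first exact: FG.
by congr (_ * _); apply: eq_bigr => x _; apply: IH.
Qed.

Lemma ler_Ex_draws C b (F G : seq 'I_n -> R) :
  (forall s, F s <= G s) -> Ex_draws C b F <= Ex_draws C b G.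
Proof.
elim: b F G => [|b IH] F G FG /=; first exact: FG.
by rewrite ler_wpM2l ?invr_ge0 // ler_sum // => x _; apply: IH.
Qed.

Lemma Ex_drawsD C b (F G : seq 'I_n -> R) :
  Ex_draws C b (fun s => F s + G s) = Ex_draws C b F + Ex_draws C b G.
Proof.
elim: b F G => [|b IH] F G //=.
by rewrite -mulrDr -big_split; congr (_ * _); apply: eq_bigr => x _; apply: IH.
Qed.

Lemma Ex_drawsZ C b (F : seq 'I_n -> R) k :
  Ex_draws C b (fun s => k * F s) = k * Ex_draws C b F.
Proof.
elim: b F => [|b IH] F //=.
by rewrite mulrCA; congr (_ * _); rewrite mulr_sumr; apply: eq_bigr => x _; apply: IH.
Qed.

Lemma Ex_draws_cst C b (k : R) : C != finset.set0 -> Ex_draws C b (fun _ => k) = k.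
Proof.
move=> C0; elim: b => [|b IH] //=.
rewrite (eq_bigr (fun _ => k)) // sumr_const -[k *+ _]mulr_natr mulrCA.
by rewrite mulVf ?mulr1 // card_neq0.
Qed.

Lemma Ex_draws_sum C b (f : 'I_n -> R) : C != finset.set0 ->
  Ex_draws C b (fun s => \sum_(x <- s) f x) = b%:R * (#|C|%:R^-1 * \sum_(x in C) f x).
Proof.
move=> C0; elim: b => [|b IH] /=; first by rewrite big_nil mul0r.
rewrite (eq_bigr (fun x => f x + b%:R * (#|C|%:R^-1 * \sum_(x in C) f x))); last first.
  move=> x _; rewrite -IH -(Ex_draws_cst b (f x) C0) -Ex_drawsD.
  by apply: eq_Ex_draws => s; rewrite big_cons.
rewrite big_split /= sumr_const -mulr_natr -natr1.
by field; apply: card_neq0.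
Qed.

Lemma eq_Ex_step ch (F G : outcome n -> R) :
  (forall o, F o = G o) -> Ex_step ch F = Ex_step ch G.
Proof.
elim: ch F G => [|[C b] ch IH] F G FG /=; first exact: FG.
by apply: eq_Ex_draws => B; apply: IH => o; apply: FG.
Qed.

Lemma ler_Ex_step ch (F G : outcome n -> R) :
  (forall o, F o <= G o) -> Ex_step ch F <= Ex_step ch G.
Proof.
elim: ch F G => [|[C b] ch IH] F G FG /=; first exact: FG.
by apply: ler_Ex_draws => B; apply: IH => o; apply: FG.
Qed.

Lemma Ex_stepD ch (F G : outcome n -> R) :
  Ex_step ch (fun o => F o + G o) = Ex_step ch F + Ex_step ch G.
Proof.
elim: ch F G => [|[C b] ch IH] F G //=.
by rewrite -Ex_drawsD; apply: eq_Ex_draws => B; apply: IH.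
Qed.

Lemma Ex_stepZ ch (F : outcome n -> R) k :
  Ex_step ch (fun o => k * F o) = k * Ex_step ch F.
Proof.
elim: ch F => [|[C b] ch IH] F //=.
by rewrite -Ex_drawsZ; apply: eq_Ex_draws => B; apply: IH.
Qed.

Lemma Ex_stepN ch (F : outcome n -> R) :
  Ex_step ch (fun o => - F o) = - Ex_step ch F.
Proof.
by rewrite -mulN1r -Ex_stepZ; apply: eq_Ex_step => o; rewrite mulN1r.
Qed.

Lemma Ex_step_cst ch (k : R) :
  (forall p, p \in ch -> p.1 != finset.set0) -> Ex_step ch (fun _ => k) = k.
Proof.
elim: ch => [|[C b] ch IH] //= Hch.
rewrite (eq_Ex_draws _ _ (G := fun _ => k)); last first.
  by move=> B; apply: IH => p pin; apply: Hch; rewrite inE pin orbT.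
by apply: Ex_draws_cst; apply: (Hch (C, b)); rewrite mem_head.
Qed.

Lemma valid_choice_nonempty ch :
  valid_choice ch -> forall p, p \in ch -> p.1 != finset.set0.
Proof. by case=> _ Hch p /Hch []. Qed.

Lemma Ex_step_ge0 ch (F : outcome n -> R) :
  valid_choice ch -> (forall o, 0 <= F o) -> 0 <= Ex_step ch F.
Proof.
by move=> vc F0; rewrite -(Ex_step_cst 0 (valid_choice_nonempty vc)); apply: ler_Ex_step.
Qed.

(* Each block contributes [n_i/b_i] times [b_i] draws of mean [1/n_i sum_(s in C_i) f s]. *)
Lemma Ex_step_stratified_sum ch (f : 'I_n -> R) :
  (forall p, p \in ch -> p.1 != finset.set0 /\ (0 < p.2)%N) ->
  Ex_step ch (fun o => \sum_(pB <- zip ch o)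
      ((#|pB.1.1|%:R / pB.1.2%:R) * \sum_(s <- pB.2) f s))
  = \sum_(p <- ch) \sum_(s in p.1) f s.
Proof.
elim: ch => [|[C b] ch IH] Hch /=; first by rewrite !big_nil.
have Hch' p : p \in ch -> p.1 != finset.set0 /\ (0 < p.2)%N.
  by move=> pin; apply: Hch; rewrite inE pin orbT.
have [C0 b0] := Hch (C, b) (mem_head _ _).
rewrite big_cons (eq_Ex_draws _ _ (G := fun B => (#|C|%:R / b%:R) * \sum_(s <- B) f s
    + \sum_(p <- ch) \sum_(s in p.1) f s)); last first.
  move=> B; rewrite (eq_Ex_step _ (G := fun Bs => (#|C|%:R / b%:R) * \sum_(s <- B) f s +
      \sum_(pB <- zip ch Bs) ((#|pB.1.1|%:R / pB.1.2%:R) * \sum_(s <- pB.2) f s))).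
    by rewrite Ex_stepD Ex_step_cst ?IH // => p /Hch' [].
  by move=> Bs; rewrite /= big_cons.
rewrite Ex_drawsD Ex_drawsZ Ex_draws_sum // Ex_draws_cst //; congr (_ + _).
by field; rewrite card_neq0 //= pnatr_eq0 -lt0n.
Qed.

Lemma sum_partition ch (f : 'I_n -> R) :
  valid_choice ch -> \sum_(p <- ch) \sum_(s in p.1) f s = \sum_s f s.
Proof.
case=> Hc _.
rewrite (eq_bigr (fun p : {set 'I_n} * nat => \sum_s (if s \in p.1 then f s else 0)));
  last by move=> p _; rewrite big_mkcond.
rewrite exchange_big /=; apply: eq_bigr => s _.
by rewrite -big_mkcond big_const_seq /= Hc /= addr0.
Qed.

End SamplingExpectation.

Section StochasticGradient.
Variables (R : realType) (d n : nat) (grad : 'I_n -> 'rV[R]_d -> 'rV[R]_d).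
Variables (ch : choice_t n) (w : 'rV[R]_d).
Hypothesis vc : valid_choice ch.

Let g o := stoch_grad grad ch o w.
Let m := gradavg grad w.

Lemma stoch_grad_unbiased c : Ex_step ch (fun o => dotv c (g o)) = dotv c m.
Proof.
rewrite (eq_Ex_step _ (G := fun o => n%:R^-1 * \sum_(pB <- zip ch o)
      ((#|pB.1.1|%:R / pB.1.2%:R) * \sum_(s <- pB.2) dotv c (grad s w)))); last first.
  move=> o; rewrite /g /stoch_grad dotvZr dotv_sumr; congr (_ * _).
  by apply: eq_bigr => pB _; rewrite dotvZr dotv_sumr.
rewrite Ex_stepZ Ex_step_stratified_sum; last exact: vc.2.
by rewrite sum_partition // /m /gradavg dotvZr dotv_sumr.
Qed.

Lemma stoch_grad_second_moment :
  Ex_step ch (fun o => sqnorm (g o)) = sqnorm m + Ex_step ch (fun o => sqnorm (g o - m)).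
Proof.
rewrite (eq_Ex_step _ (G := fun o => sqnorm (g o - m) +
   (2 * dotv m (g o) + (- sqnorm m)))); last first.
  by move=> o; rewrite sqnormB (dotvC (g o)); ring.
rewrite !Ex_stepD Ex_stepZ stoch_grad_unbiased.
rewrite Ex_step_cst; last exact: valid_choice_nonempty.
by rewrite /sqnorm; ring.
Qed.

End StochasticGradient.

Section Descent.
Variables (R : realType) (d n : nat).
Variables (phi : 'I_n -> 'rV[R]_d -> R) (grad : 'I_n -> 'rV[R]_d -> 'rV[R]_d).
Variables (H gam : R) (wstar : 'rV[R]_d).
Hypothesis gam_gt0 : 0 < gam.
Hypothesis sc : strongly_convex H (Pavg phi) (gradavg grad).
Hypothesis sm : smooth gam (Pavg phi) (gradavg grad).

Let P := Pavg phi.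
Let gradP := gradavg grad.

Lemma smooth_step_bound w (G : 'rV[R]_d) x : x != 0 ->
  P (w - x^-1 *: G) + x / 2 * sqnorm (w - x^-1 *: G - wstar) <=
  P w + x / 2 * sqnorm (w - wstar) - x^-1 * dotv (gradP w) G
  + (x^-2 / (2 * gam) + x^-1 / 2) * sqnorm G - dotv (w - wstar) G.
Proof.
move=> x0.
have hsm : P (w - x^-1 *: G) <=
    P w - x^-1 * dotv (gradP w) G + x^-2 / (2 * gam) * sqnorm G.
  have := sm (w - x^-1 *: G) w.
  rewrite (_ : w - x^-1 *: G - w = - (x^-1 *: G)); last by rewrite addrAC subrr add0r.
  rewrite dotvNr dotvZr sqnormN sqnormZ exprVn -/P -/gradP.
  by rewrite (_ : 1 / (2 * gam) * _ = x^-2 / (2 * gam) * sqnorm G) //; ring.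
have -> : x / 2 * sqnorm (w - x^-1 *: G - wstar)
    = x / 2 * sqnorm (w - wstar) - dotv (w - wstar) G + x^-1 / 2 * sqnorm G.
  by rewrite addrAC sqnormB dotvZr sqnormZ exprVn; field.
lra.
Qed.

(* [x^-1 <= gam] makes the coefficient of [E |g|^2 = |gradP w|^2 + V] at most [x^-1], and
   strong convexity trades [<gradP w, w - wstar>] for [H/2] of the distance. *)
Lemma sgd_step_bound (ch : choice_t n) w x :
  valid_choice ch -> 1 / gam <= x ->
  Ex_step ch (fun o => P (w - x^-1 *: stoch_grad grad ch o w)
                     + x / 2 * sqnorm (w - x^-1 *: stoch_grad grad ch o w - wstar))
  <= P wstar + (x - H) / 2 * sqnorm (w - wstar)
     + Ex_step ch (fun o => sqnorm (stoch_grad grad ch o w - gradP w)) / x.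
Proof.
move=> vc gx.
have x_gt0 : 0 < x by apply: lt_le_trans gx; rewrite divr_gt0.
have e_le : x^-2 / (2 * gam) <= x^-1 / 2.
  have -> : x^-2 / (2 * gam) = x^-1 / 2 * (x * gam)^-1.
    by rewrite invfM; field; rewrite !gt_eqF.
  apply: ler_piMr; first by rewrite divr_ge0 // invr_ge0 ltW.
  by rewrite invf_le1 ?mulr_gt0 // -ler_pdivrMr.
apply: le_trans; first by apply: ler_Ex_step => o; apply: smooth_step_bound; rewrite gt_eqF.
rewrite !Ex_stepD !Ex_stepN !Ex_stepZ !(Ex_step_cst _ (valid_choice_nonempty vc)).
rewrite !stoch_grad_unbiased // stoch_grad_second_moment // -/P -/gradP.
set m := gradP w; set V := Ex_step ch _.
have V_ge0 : 0 <= V by apply: Ex_step_ge0 => // o; apply: sqnorm_ge0.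
have hsc := sc wstar w.
rewrite -/P -/gradP -/m -opprB dotvNr sqnormN (dotvC m) in hsc.
have km : (x^-2 / (2 * gam) - x^-1 / 2) * sqnorm m <= 0.
  by rewrite mulr_le0_ge0 ?sqnorm_ge0 // subr_le0.
have kV : (x^-2 / (2 * gam) - x^-1 / 2) * V <= 0.
  by rewrite mulr_le0_ge0 // subr_le0.
rewrite (mulrC V) -/(sqnorm m) -[n%:R^-1 * _]/(P w); lra.
Qed.

End Descent.

Section TrajectoryExpectation.
Variables (R : realType) (n : nat) (strat : history n -> choice_t n).
Hypothesis valid : forall h, valid_choice (strat h).

Lemma ler_ExT m (F G : history n -> R) h :
  (forall h', size h' = (m + size h)%N -> F h' <= G h') ->
  ExT strat m F h <= ExT strat m G h.
Proof.
elim: m h => [|m IH] h FG /=; first exact: FG.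
by apply: ler_Ex_step => o; apply: IH => h' sh; apply: FG; rewrite sh /= addnS.
Qed.

Lemma ExTD m (F G : history n -> R) h :
  ExT strat m (fun h => F h + G h) h = ExT strat m F h + ExT strat m G h.
Proof.
elim: m h => [|m IH] h //=.
by rewrite -Ex_stepD; apply: eq_Ex_step => o; apply: IH.
Qed.

Lemma ExTZ m (F : history n -> R) k h :
  ExT strat m (fun h => k * F h) h = k * ExT strat m F h.
Proof.
elim: m h => [|m IH] h //=.
by rewrite -Ex_stepZ; apply: eq_Ex_step => o; apply: IH.
Qed.

Lemma ExT_cst m (k : R) h : ExT strat m (fun _ => k) h = k.
Proof.
elim: m h => [|m IH] h //=.
rewrite (eq_Ex_step _ (G := fun _ => k)) // Ex_step_cst //.
exact: valid_choice_nonempty.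
Qed.

Lemma ExT_ge0 m (F : history n -> R) h :
  (forall h', 0 <= F h') -> 0 <= ExT strat m F h.
Proof. by move=> F0; rewrite -(ExT_cst m 0 h); apply: ler_ExT. Qed.

Lemma ExTSr m (F : history n -> R) h :
  ExT strat m.+1 F h = ExT strat m (fun h' => Ex_step (strat h') (fun o => F (o :: h'))) h.
Proof.
elim: m h => [|m IH] h //=.
by apply: eq_Ex_step => o; apply: IH.
Qed.

End TrajectoryExpectation.

Section Averages.
Variable R : realFieldType.

Lemma telescope_potential_le (u c D W : nat -> R) k :
  (forall t, u t.+1 + c t.+1 * D t.+1 <= c t * D t + W t.+1) ->
  \sum_(1 <= t < k.+1) u t + c k * D k <= c 0%N * D 0%N + \sum_(1 <= t < k.+1) W t.
Proof.
move=> step; elim: k => [|k IH]; first by rewrite !big_geq // add0r addr0.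
rewrite big_nat_recr // [X in _ <= _ + X]big_nat_recr //=.
have sk := step k; lra.
Qed.

Lemma bigmin_le_avg (F : nat -> R) x0 T : (0 < T)%N ->
  \big[Num.min/x0]_(1 <= t < T.+1) F t <= T%:R^-1 * \sum_(1 <= t < T.+1) F t.
Proof.
move=> T_gt0; set mn := \big[Num.min/x0]_(1 <= t < T.+1) F t.
have le_sum : \sum_(1 <= t < T.+1) mn <= \sum_(1 <= t < T.+1) F t.
  by apply: ler_sum_nat => t tin; apply: ge_bigmin_seq; rewrite ?mem_index_iota.
rewrite sumr_const_nat subn1 /= -mulr_natr in le_sum.
by rewrite ler_pdivlMl ?ltr0n // mulrC.
Qed.

End Averages.

Section SGDTrajectory.
Variables (R : realType) (d n : nat).
Variables (phi : 'I_n -> 'rV[R]_d -> R) (grad : 'I_n -> 'rV[R]_d -> 'rV[R]_d).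
Variables (strat : history n -> choice_t n) (H gam a : R) (wstar : 'rV[R]_d).
Hypothesis valid : forall h, valid_choice (strat h).
Hypotheses (H_ge0 : 0 <= H) (gam_gt0 : 0 < gam).
Hypothesis sc : strongly_convex H (Pavg phi) (gradavg grad).
Hypothesis sm : smooth gam (Pavg phi) (gradavg grad).
Hypothesis a_ge : a >= 1 / gam - H.

Let eta (t : nat) := 1 / (a + H * t%:R).
Let w h := iterate grad strat eta h.
Let P := Pavg phi.
Let dist2 h := sqnorm (w h - wstar).

Lemma step_size_le (t : nat) : 1 / gam <= a + H * t.+1%:R.
Proof.
apply: (@le_trans _ _ (a + H)); first by rewrite -lerBlDr.
by rewrite lerD2l ler_peMr // ler1n.
Qed.

Lemma iterate_step_bound h :
  Ex_step (strat h) (fun o => P (w (o :: h)) + (a + H * (size h).+1%:R) / 2 * dist2 (o :: h))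
  <= P wstar + (a + H * (size h)%:R) / 2 * dist2 h
     + Vcond grad strat eta h / (a + H * (size h).+1%:R).
Proof.
have := sgd_step_bound wstar gam_gt0 sc sm (w h) (valid h) (step_size_le (size h)).
have -> : a + H * (size h).+1%:R - H = a + H * (size h)%:R by rewrite -natr1; ring.
have eta_step : eta (size h).+1 = (a + H * (size h).+1%:R)^-1 by rewrite /eta div1r.
by rewrite /dist2 /w /= eta_step.
Qed.

Let EP t := ExT strat t (fun h => P (w h)) [::].
Let D t := ExT strat t dist2 [::].
Let W t := ExT strat t.-1 (fun h => Vcond grad strat eta h / (a + H * t%:R)) [::].

Lemma expected_potential_step k :
  (EP k.+1 - P wstar) + (a + H * k.+1%:R) / 2 * D k.+1
  <= (a + H * k%:R) / 2 * D k + W k.+1.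
Proof.
have -> : EP k.+1 - P wstar + (a + H * k.+1%:R) / 2 * D k.+1 =
    ExT strat k.+1 (fun h => P (w h) + (a + H * k.+1%:R) / 2 * dist2 h) [::] - P wstar.
  by rewrite ExTD ExTZ addrAC.
rewrite ExTSr lerBlDl addrA.
have -> : P wstar + (a + H * k%:R) / 2 * D k + W k.+1 = ExT strat k (fun h =>
    P wstar + (a + H * k%:R) / 2 * dist2 h + Vcond grad strat eta h / (a + H * k.+1%:R)) [::].
  by rewrite !ExTD ExTZ ExT_cst.
by apply: ler_ExT => h; rewrite addn0 => <-; apply: iterate_step_bound.
Qed.

Lemma avg_suboptimality_le T : (0 < T)%N ->
  T%:R^-1 * \sum_(1 <= t < T.+1) EP t - P wstar
  <= T%:R^-1 * (a / 2 * sqnorm wstar + \sum_(1 <= t < T.+1) W t).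
Proof.
move=> T_gt0.
have := telescope_potential_le (u := fun t => EP t - P wstar)
  (c := fun t => (a + H * t%:R) / 2) T expected_potential_step.
have dist2_0 : dist2 [::] = sqnorm wstar by rewrite /dist2 /w /= sub0r sqnormN.
rewrite mulr0 addr0 [D 0%N]dist2_0 => tele.
have cT_gt0 : 0 < (a + H * T%:R) / 2.
  rewrite divr_gt0 //; case: T T_gt0 {tele} => // T _.
  by apply: lt_le_trans (step_size_le T); rewrite divr_gt0.
have D_ge0 : 0 <= D T by apply: ExT_ge0 => // h; apply: sqnorm_ge0.
have -> : T%:R^-1 * \sum_(1 <= t < T.+1) EP t - P wstar
    = T%:R^-1 * \sum_(1 <= t < T.+1) (EP t - P wstar).
  rewrite sumrB sumr_const_nat subn1 /= -[P wstar *+ T]mulr_natr mulrBr mulrCA mulVf ?mulr1 //.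
  by rewrite pnatr_eq0 -lt0n.
rewrite ler_wpM2l ?invr_ge0 //.
have cD_ge0 := mulr_ge0 (ltW cT_gt0) D_ge0; lra.
Qed.

End SGDTrajectory.

Theorem theorem1 (R : realType) (d n : nat)
  (phi : 'I_n -> 'rV[R]_d -> R) (grad : 'I_n -> 'rV[R]_d -> 'rV[R]_d)
  (H gam a : R) (wstar : 'rV[R]_d) (strat : history n -> choice_t n) (T : nat) :
  (0 < n)%N ->
  (forall i, is_gradient (phi i) (grad i)) ->
  0 <= H -> 0 < gam ->
  strongly_convex H (Pavg phi) (gradavg grad) ->
  smooth gam (Pavg phi) (gradavg grad) ->
  (forall w, Pavg phi wstar <= Pavg phi w) ->
  a >= 1 / gam - H ->
  (forall h, valid_choice (strat h)) ->
  (1 <= T)%N ->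
  let eta := fun t : nat => 1 / (a + H * t%:R) in
  let EP := fun t : nat =>
    ExT strat t (fun h => Pavg phi (iterate grad strat eta h)) [::] in
  let avg := T%:R^-1 * \sum_(1 <= t < T.+1) EP t in
  (\big[Num.min/EP 1%N]_(1 <= t < T.+1) EP t) - Pavg phi wstar
    <= avg - Pavg phi wstar /\
  avg - Pavg phi wstar <=
    T%:R^-1 * (a / 2 * sqnorm wstar +
      \sum_(1 <= t < T.+1)
        ExT strat t.-1 (fun h => Vcond grad strat eta h / (a + H * t%:R)) [::]).
Proof.
move=> _ _ H_ge0 gam_gt0 sc sm _ a_ge valid T_gt0 eta EP avg.
split; first by rewrite lerD2r bigmin_le_avg.
exact: (avg_suboptimality_le wstar valid H_ge0 gam_gt0 sc sm a_ge T_gt0).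
Qed.
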